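(* Let $p\in(0,1)$ be fixed, let $C$ be a positive integer, and let $\mathcal{E}\subset[n]^2$ be such that, for every $i\in[n]$, $$ \left|\{j\in[n]:(i,j)\in\mathcal{E}\}\right|\leqslant C,\qquad \left|\{j\in[n]:(j,i)\in\mathcal{E}\}\right|\leqslant C. $$ Then the probability that there exists a perfect matching in $G(n,n,p)$ containing no edge from $\mathcal{E}$ is $1-e^{-\Omega(n)}$.
   Context: $G(n,n,p)$ is the random bipartite graph obtained from the complete bipartite graph $K_{n,n}$, whose two parts are each identified with $[n]$, by keeping each edge independently with probability $p$; a pair $(i,j)\in[n]^2$ is identified with the edge between vertex $i$ of the first part and vertex $j$ of the second part. $\Omega(n)$ refers to $n\to\infty$ with $p$ and $C$ fixed. *)

From mathcomp Require Import all_boot all_order all_fingroup all_algebra.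
From mathcomp Require Import reals sequences exp.
Set Implicit Arguments. Unset Strict Implicit. Unset Printing Implicit Defensive.
Import Order.TTheory GRing.Theory Num.Theory.
Local Open Scope ring_scope.

(* A bipartite graph on parts [n] x [n] = set of pairs (i,j): edge between
   vertex i of the first part and vertex j of the second part. *)
Definition bgraph (n : nat) := {set 'I_n * 'I_n}.

(* Probability of the outcome G under G(n,n,p): each of the n^2 edges
   kept independently with probability p. *)
Definition Gnnp_weight (R : realType) (p : R) (n : nat) (G : bgraph n) : R :=
  p ^+ #|G| * (1 - p) ^+ (n * n - #|G|)%N.

Definition Gnnp_prob (R : realType) (p : R) (n : nat) (A : pred (bgraph n)) : R :=
  \sum_(G : bgraph n | A G) Gnnp_weight p G.

Definition has_pm_avoiding (n : nat) (E : bgraph n) (G : bgraph n) : bool :=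
  [exists s : {perm 'I_n}, [forall i, ((i, s i) \in G) && ((i, s i) \notin E)]].

Definition deg_bounded (n C : nat) (E : bgraph n) : Prop :=
  forall i : 'I_n,
    (#|[set j : 'I_n | (i, j) \in E]| <= C)%N /\
    (#|[set j : 'I_n | (j, i) \in E]| <= C)%N.

From mathcomp Require Import all_boot all_order all_fingroup all_algebra.
From mathcomp Require Import reals sequences exp zify ring lra.
Import Order.TTheory GRing.Theory Num.Theory.
Set Implicit Arguments. Unset Strict Implicit. Unset Printing Implicit Defensive.

(* Call an edge (i, j) allowed if it is in G but not in E.  If every row and
   every column has at least d allowed neighbours and any d rows and d columns
   are joined by an allowed edge, there is an allowed perfect matching: take a
   permutation s matching the most rows; for an unmatched row u, the d rows
   s^-1(N(u)) and the d columns s(N^-1(s u)) are joined by an allowed edge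
   (x, s y), and the rotation u -> s x, x -> s y, y -> s u matches more rows.
   Hence if G has no such matching, G is disjoint from one of the following
   edge sets: for a vertex u and a set U of size < d containing its allowed
   neighbours, the pairs from u to the outside of U that are not in E (at least
   n - |U| - C of them); or, for two d-sets S and T, the pairs of S x T that
   are not in E (at least d (d - C) of them).  With d = n / K, a union
   bound over these events gives a failure probability at most
   2 n (1-p)^-C ((1-p)(1+a)^2)^n + (4 (1-p)^M)^n, which is exponentially small
   for a small and K, M large. *)

Section PermutationExpansion.
Variables (T : finType) (H : rel T).

Definition matched (s : {perm T}) := [set i | H i (s i)].

Lemma matched_rotate (s : {perm T}) (u x y : T) :
  ~~ H u (s u) -> H u (s x) -> H x (s y) -> H y (s u) ->
  exists s' : {perm T}, #|matched s| < #|matched s'|.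
Proof.
move=> Hu Hux Hxy Hyu.
have ux : u != x by apply: contraNneq Hu => eq_ux; rewrite {2}eq_ux.
have uy : u != y by apply: contraNneq Hu => eq_uy; rewrite {1}eq_uy.
(* [i |-> s (tau i)] maps u to s x, x to s y and y to s u. *)
pose tau := (tperm x y * tperm u x)%g.
have tauE i : i \notin [:: u; x; y] -> tau i = i.
  by rewrite !inE => /norP [iu /norP [ix iy]]; rewrite permM !tpermD // eq_sym.
have tau_matched i : i \in [:: u; x; y] -> H i (s (tau i)).
  rewrite !inE permM => /or3P [] /eqP ->.
  - by rewrite [tperm x y u]tpermD 1?eq_sym // tpermL.
  - have [eq_xy|xy] := eqVneq x y; first by rewrite -eq_xy !tpermR eq_xy.
    by rewrite tpermL [tperm u x y]tpermD // eq_sym.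
  - by rewrite tpermR tpermR.
exists (tau * s)%g; apply: proper_card; apply/properP; split.
  apply/subsetP => i; rewrite !inE permM.
  by have [/tau_matched //|/tauE ->] := boolP (i \in [:: u; x; y]).
by exists u; rewrite inE // permM tau_matched ?mem_head.
Qed.

Lemma perm_of_expansion (d : nat) :
  (forall u, d <= #|[set v | H u v]|) -> (forall v, d <= #|[set u | H u v]|) ->
  (forall A B : {set T}, d <= #|A| -> d <= #|B| ->
     exists a b, [/\ a \in A, b \in B & H a b]) ->
  exists s : {perm T}, forall i, H i (s i).
Proof.
move=> row_deg col_deg rect.
have [s _ s_max] := @arg_maxnP _ 1%g xpredT (fun s => #|matched s|) isT.
exists s => u; apply/negPn/negP => Hu.
have [||_ [_ [/imsetP [j + ->] /imsetP [y + ->] Hab]]] :=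
  rect ((s^-1)%g @: [set v | H u v]) (s @: [set w | H w (s u)]).
- by rewrite card_imset //; apply: perm_inj.
- by rewrite card_imset //; apply: perm_inj.
rewrite !inE -{1}(permKV s j) => Huj Hyu.
have [s' lt_s] := matched_rotate Hu Huj Hab Hyu.
by have := leq_trans lt_s (s_max s' isT); rewrite ltnn.
Qed.

End PermutationExpansion.

Lemma card_setX_rows (T1 T2 : finType) (A : {set T1 * T2}) :
  #|A| = \sum_i #|[set j | (i, j) \in A]|.
Proof.
pose inA i j := if (i, j) \in A then 1 else 0.
rewrite -sum1_card big_mkcond /= (eq_bigr (fun e => inA e.1 e.2)) => [|[] //].
rewrite -(pair_bigA _ inA) /=.
apply: eq_bigr => i _; rewrite -sum1_card [RHS]big_mkcond.
by apply: eq_bigr => j _; rewrite inE.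
Qed.

Lemma leq_card_setD (T : finType) (A B : {set T}) : #|A| - #|B| <= #|A :\: B|.
Proof. by rewrite cardsD leq_sub2l // subset_leq_card // subsetIr. Qed.

Section Obstructions.
Variables (n : nat) (E : bgraph n).

Definition allowed (G : bgraph n) : rel 'I_n :=
  fun i j => ((i, j) \in G) && ((i, j) \notin E).

Definition row_obstruction (u : 'I_n) (U : {set 'I_n}) : bgraph n :=
  [set (u, j) | j in ~: U :\: [set j | (u, j) \in E]].

Definition col_obstruction (v : 'I_n) (U : {set 'I_n}) : bgraph n :=
  [set (i, v) | i in ~: U :\: [set i | (i, v) \in E]].

Definition rect_obstruction (S T : {set 'I_n}) : bgraph n := setX S T :\: E.

Definition obstruction_index :=
  (('I_n * {set 'I_n}) + ('I_n * {set 'I_n}) + ({set 'I_n} * {set 'I_n}))%type.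

Definition obstruction (k : obstruction_index) : bgraph n :=
  match k with
  | inl (inl x) => row_obstruction x.1 x.2
  | inl (inr x) => col_obstruction x.1 x.2
  | inr x => rect_obstruction x.1 x.2
  end.

Definition obstruction_admissible (d : nat) (k : obstruction_index) : bool :=
  match k with
  | inl (inl x) | inl (inr x) => #|x.2| < d
  | inr x => (d <= #|x.1|) && (d <= #|x.2|)
  end.

Lemma disjoint_row_obstruction (G : bgraph n) (u : 'I_n) :
  [disjoint G & row_obstruction u [set j | allowed G u j]].
Proof.
rewrite disjoint_sym disjoints_subset; apply/subsetP => _ /imsetP [j + ->].
rewrite !inE => /andP [ujE not_allowed]; apply: contra not_allowed => ujG.
by rewrite /allowed ujG ujE.
Qed.

Lemma disjoint_col_obstruction (G : bgraph n) (v : 'I_n) :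
  [disjoint G & col_obstruction v [set i | allowed G i v]].
Proof.
rewrite disjoint_sym disjoints_subset; apply/subsetP => _ /imsetP [i + ->].
rewrite !inE => /andP [ivE not_allowed]; apply: contra not_allowed => ivG.
by rewrite /allowed ivG ivE.
Qed.

Lemma disjoint_rect_obstruction (G : bgraph n) (S T : {set 'I_n}) :
  [forall a in S, forall b in T, ~~ allowed G a b] ->
  [disjoint G & rect_obstruction S T].
Proof.
move=> /forall_inP no_edge; rewrite disjoint_sym disjoints_subset.
apply/subsetP => -[a b]; rewrite !inE /= => /andP [abE /andP [aS bT]].
by have /forall_inP/(_ b bT) := no_edge a aS; rewrite /allowed abE andbT.
Qed.

Lemma no_pm_obstruction (d : nat) (G : bgraph n) :
  ~~ has_pm_avoiding E G ->
  exists2 k, obstruction_admissible d k & [disjoint G & obstruction k].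
Proof.
move=> no_pm.
case: (pickP (fun u => #|[set j | allowed G u j]| < d)) => [u small_u | row_deg].
  exists (inl (inl (u, [set j | allowed G u j]))) => //.
  exact: disjoint_row_obstruction.
case: (pickP (fun v => #|[set i | allowed G i v]| < d)) => [v small_v | col_deg].
  exists (inl (inr (v, [set i | allowed G i v]))) => //.
  exact: disjoint_col_obstruction.
case: (pickP (fun x : {set 'I_n} * {set 'I_n} => [&& d <= #|x.1|, d <= #|x.2| &
    [forall a in x.1, forall b in x.2, ~~ allowed G a b]])) => [[S T] | no_rect].
  case/and3P=> dS dT no_edge; exists (inr (S, T)); first by rewrite /= dS.
  exact: disjoint_rect_obstruction.
have rect (A B : {set 'I_n}) : d <= #|A| -> d <= #|B| ->
    exists a b, [/\ a \in A, b \in B & allowed G a b].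
  move=> dA dB; move/negbT: (no_rect (A, B)); rewrite /= dA dB /= negb_forall_in.
  case/exists_inP => a aA; rewrite negb_forall_in => /exists_inP [b bB].
  by rewrite negbK => ab; exists a, b.
have row (u : 'I_n) : d <= #|[set j | allowed G u j]| by rewrite leqNgt row_deg.
have col (v : 'I_n) : d <= #|[set i | allowed G i v]| by rewrite leqNgt col_deg.
have [s Hs] := perm_of_expansion row col rect.
by case/negP: no_pm; apply/existsP; exists s; apply/forallP.
Qed.

Variable C : nat.
Hypothesis E_deg : deg_bounded C E.

Lemma card_setC_ord (U : {set 'I_n}) : #|~: U| = n - #|U|.
Proof. by rewrite cardsCs setCK card_ord. Qed.

Lemma card_row_obstruction (u : 'I_n) (U : {set 'I_n}) :
  n - #|U| - C <= #|row_obstruction u U|.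
Proof.
rewrite card_imset => [|j j' [] //]; apply: leq_trans (leq_card_setD _ _).
by rewrite card_setC_ord leq_sub2l //; case: (E_deg u).
Qed.

Lemma card_col_obstruction (v : 'I_n) (U : {set 'I_n}) :
  n - #|U| - C <= #|col_obstruction v U|.
Proof.
rewrite card_imset => [|i i' [] //]; apply: leq_trans (leq_card_setD _ _).
by rewrite card_setC_ord leq_sub2l //; case: (E_deg v).
Qed.

Lemma card_rect_obstruction (S T : {set 'I_n}) :
  #|S| * (#|T| - C) <= #|rect_obstruction S T|.
Proof.
rewrite card_setX_rows (bigID (mem S)) /= -sum_nat_const.
apply: leq_trans (leq_addr _ _); apply: leq_sum => i iS.
have -> : [set j | (i, j) \in rect_obstruction S T] = T :\: [set j | (i, j) \in E].
  by apply/setP => j; rewrite !inE iS andbC.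
by apply: leq_trans (leq_card_setD _ _); rewrite leq_sub2l //; case: (E_deg i).
Qed.

End Obstructions.

Local Open Scope ring_scope.

Section SubsetSums.
Variables (R : comPzRingType) (T : finType).

Lemma sum_set_prod (f : T -> bool -> R) :
  \sum_(A : {set T}) \prod_t f t (t \in A) = \prod_t (f t true + f t false).
Proof.
rewrite [RHS](eq_bigr (fun t => \sum_(b : bool) f t b)) => [|t _]; last first.
  by rewrite big_bool.
rewrite bigA_distr_bigA (reindex (fun g : {ffun T -> bool} => [set t | g t])) /=.
  by apply: eq_bigr => g _; apply: eq_bigr => t _; rewrite inE.
exists (fun A : {set T} => [ffun t => t \in A]) => [g _ | A _].
  by apply/ffunP => t; rewrite ffunE inE.
by apply/setP => t; rewrite inE ffunE.
Qed.

Lemma expr_card_prod (A : {set T}) (a b : R) :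
  a ^+ #|A| * b ^+ (#|T| - #|A|) = \prod_t (if t \in A then a else b).
Proof.
rewrite (bigID (mem A)) /= -(cardsC A) addKn.
rewrite (eq_bigr (fun _ => a)) => [|t ->] //; rewrite prodr_const cardsE.
rewrite (eq_bigr (fun _ => b)) => [|t /negbTE ->] //; rewrite prodr_const.
by congr (_ * _ ^+ _); apply: eq_card => t; rewrite !inE.
Qed.

Lemma sum_disjoint_expr_card (F : {set T}) (a b : R) :
  \sum_(A : {set T} | [disjoint A & F]) a ^+ #|A| * b ^+ (#|T| - #|A|)
    = b ^+ #|F| * (a + b) ^+ (#|T| - #|F|).
Proof.
pose f t (inA : bool) := if inA then (if t \in F then 0 else a) else b.
have termE (A : {set T}) :
    (if [disjoint A & F] then a ^+ #|A| * b ^+ (#|T| - #|A|) else 0)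
      = \prod_t f t (t \in A).
  case: ifPn => [AF | /pred0Pn [t /andP [tA tF]]]; last first.
    by rewrite (bigD1 t) //= /f ifT // ifT // mul0r.
  rewrite expr_card_prod; apply: eq_bigr => t _; rewrite /f.
  by case: ifP => // tA; rewrite (disjointFr AF tA).
rewrite big_mkcond (eq_bigr _ (fun A _ => termE A)) sum_set_prod.
rewrite expr_card_prod; apply: eq_bigr => t _; rewrite /f.
by case: (t \in F); rewrite ?add0r.
Qed.

Lemma sum_expr_card (y : R) : \sum_(A : {set T}) y ^+ #|A| = (y + 1) ^+ #|T|.
Proof.
under eq_bigr => A _ do rewrite -[y ^+ _]mulr1 -(expr1n _ (#|T| - #|A|)) expr_card_prod.
by rewrite (sum_set_prod (fun _ inA => if inA then y else 1)) prodr_const.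
Qed.

End SubsetSums.

Section RandomBipartiteGraph.
Variables (R : realType) (p : R) (n : nat).

Lemma Gnnp_weight_ge0 (G : bgraph n) : 0 <= p <= 1 -> 0 <= Gnnp_weight p G.
Proof. by case/andP => p0 p1; rewrite mulr_ge0 // exprn_ge0 // subr_ge0. Qed.

Lemma Gnnp_prob_disjoint (F : bgraph n) :
  Gnnp_prob p (fun G : bgraph n => [disjoint G & F]) = (1 - p) ^+ #|F|.
Proof.
rewrite /Gnnp_prob /Gnnp_weight.
have -> : (n * n)%N = #|{: 'I_n * 'I_n}| by rewrite card_prod card_ord.
by rewrite sum_disjoint_expr_card addrCA subrr addr0 expr1n mulr1.
Qed.

Lemma Gnnp_probC (A : pred (bgraph n)) : Gnnp_prob p A + Gnnp_prob p (predC A) = 1.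
Proof.
have total : \sum_(G : bgraph n) Gnnp_weight p G = 1.
  rewrite -(expr0 (1 - p)) -(@cards0 ('I_n * 'I_n)%type) -Gnnp_prob_disjoint.
  by apply: eq_bigl => G; rewrite disjoints_subset setC0 subsetT.
by rewrite -total (bigID A).
Qed.

Lemma Gnnp_prob_le_sum_disjoint (K : finType) (P : pred K) (F : K -> bgraph n)
    (B : pred (bgraph n)) :
  0 <= p <= 1 -> (forall G, B G -> exists2 k, P k & [disjoint G & F k]) ->
  Gnnp_prob p B <= \sum_(k | P k) (1 - p) ^+ #|F k|.
Proof.
move=> p01 cover.
have w_ge0 (G : bgraph n) : 0 <= Gnnp_weight p G by exact: Gnnp_weight_ge0.
rewrite (eq_bigr (fun k => Gnnp_prob p (fun G => [disjoint G & F k]))) => [|k _].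
  2: by rewrite Gnnp_prob_disjoint.
rewrite /Gnnp_prob (exchange_big_dep xpredT) //=.
apply: (@le_trans _ _
  (\sum_(G | B G) \sum_(k | P k && [disjoint G & F k]) Gnnp_weight p G)).
  apply: ler_sum => G /cover [k Pk dk]; rewrite (bigD1 k) ?Pk //= lerDl.
  exact: sumr_ge0.
by rewrite [X in _ <= X](bigID B) /= lerDl; apply: sumr_ge0 => G _; apply: sumr_ge0.
Qed.

End RandomBipartiteGraph.

Lemma bernoulli_ineq (R : realDomainType) (x : R) (n : nat) :
  0 <= x -> 1 + n%:R * x <= (1 + x) ^+ n.
Proof.
move=> x0; elim: n => [|n IHn]; first by rewrite mul0r addr0 expr0.
have nx0 : 0 <= n%:R * x by rewrite mulr_ge0.
by rewrite exprS -natr1; nra.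
Qed.

Lemma expr_gt1_ge (R : archiRealFieldType) (x y : R) : 1 < x -> exists k, y <= x ^+ k.
Proof.
move=> x1; have x1_gt0 : 0 < x - 1 by rewrite subr_gt0.
set k := Num.Def.archi_bound (`|y| / (x - 1)).
have k_y : `|y| < k%:R * (x - 1).
  by rewrite -ltr_pdivrMr // archi_boundP // divr_ge0 ?normr_ge0 ?(ltW x1_gt0).
exists k; have := bernoulli_ineq k (ltW x1_gt0); rewrite [1 + (x - 1)]addrC subrK.
by have := ler_norm y; lra.
Qed.

Lemma expr_lt1_le (R : archiRealFieldType) (x e : R) :
  0 < x < 1 -> 0 < e -> exists k, x ^+ k <= e.
Proof.
case/andP=> x0 x1 e0; have x_inv : 1 < x^-1 by rewrite invf_gt1.
have [k ek] := expr_gt1_ge e^-1 x_inv.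
by exists k; rewrite -[e]invrK -[x]invrK exprVn lef_pV2 ?posrE ?exprn_gt0 ?invr_gt0.
Qed.

Lemma linear_geometric_le (R : archiRealFieldType) (r A : R) : 0 < r < 1 -> 0 <= A ->
  exists2 s : R, 0 < s < 1 &
    exists N, forall n, (N <= n)%N -> (n%:R * A + 1) * r ^+ n <= s ^+ n.
Proof.
case/andP=> r0 r1 A0; set t := (1 - r) / 6.
have t0 : 0 < t by rewrite divr_gt0 ?subr_gt0.
have tE : 6 * t = 1 - r by rewrite /t mulrC divfK ?pnatr_eq0.
exists (r * (1 + t) ^+ 2).
  by rewrite mulr_gt0 ?exprn_gt0 ?addr_gt0 //= expr2; nra.
set N := Num.Def.archi_bound (A / (t * t)).
have tt0 : 0 < t * t by rewrite mulr_gt0.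
have N_A : A / (t * t) < N%:R by exact/archi_boundP/divr_ge0/ltW.
exists N => n le_Nn.
have nt_A : A <= n%:R * (t * t).
  rewrite -ler_pdivrMr //; apply: (le_trans (ltW N_A)).
  by rewrite ler_nat.
rewrite exprMn -exprM mulnC exprM mulrC ler_pM2l ?exprn_gt0 //.
have bY := bernoulli_ineq n (ltW t0).
have nt0 : 0 <= n%:R * t by rewrite mulr_ge0 ?ler0n ?(ltW t0).
have : n%:R * A <= (n%:R * t) * (n%:R * t) by rewrite mulrACA -mulrA ler_wpM2l.
by rewrite expr2; nra.
Qed.

Section LineObstructionSums.
Variables (R : realFieldType) (q a : R) (n C K : nat).
Hypotheses (q0 : 0 < q) (q1 : q <= 1) (a0 : 0 < a) (qaK : 1 <= q * a * (1 + a) ^+ K).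

Lemma expr_le_line (f m : nat) : (K * m <= n)%N -> (n <= f + C + m)%N ->
  q ^+ f <= (q * (1 + a)) ^+ n * a ^+ m / q ^+ C.
Proof.
(* 1 <= q a (1 + a)^K gives q^-m <= a^m (1 + a)^(K m) <= a^m (1 + a)^n. *)
move=> Km n_le; rewrite ler_pdivlMr ?exprn_gt0 //.
have q_fCm : q ^+ f * q ^+ C * q ^+ m <= q ^+ n.
  by rewrite -!exprD; apply: ler_wiXn2l; rewrite ?q1 ?(ltW q0).
have one_le : 1 <= q ^+ m * a ^+ m * (1 + a) ^+ n.
  apply: le_trans (exprn_ege1 m qaK) _; rewrite !exprMn -exprM.
  rewrite ler_wpM2l ?mulr_ge0 ?exprn_ge0 ?(ltW q0) ?(ltW a0) //.
  by apply: ler_weXn2l; rewrite ?lerDl ?(ltW a0) // mulnC.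
apply: le_trans (_ : q ^+ f * q ^+ C * (q ^+ m * a ^+ m * (1 + a) ^+ n) <= _).
  by rewrite ler_peMr ?mulr_ge0 ?exprn_ge0 ?(ltW q0).
have -> : q ^+ f * q ^+ C * (q ^+ m * a ^+ m * (1 + a) ^+ n)
    = q ^+ f * q ^+ C * q ^+ m * (a ^+ m * (1 + a) ^+ n) by ring.
have -> : (q * (1 + a)) ^+ n * a ^+ m = q ^+ n * (a ^+ m * (1 + a) ^+ n).
  by rewrite exprMn; ring.
by rewrite ler_wpM2r // mulr_ge0 ?exprn_ge0 ?addr_ge0 ?(ltW a0).
Qed.

Lemma sum_line_obstructions (F : 'I_n * {set 'I_n} -> bgraph n) (d : nat) :
  (K * d <= n)%N -> (forall x : 'I_n * {set 'I_n}, n - #|x.2| - C <= #|F x|)%N ->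
  \sum_(x : 'I_n * {set 'I_n} | (#|x.2| < d)%N) q ^+ #|F x|
    <= n%:R * (q * (1 + a) ^+ 2) ^+ n / q ^+ C.
Proof.
move=> Kd F_ge; pose g (U : {set 'I_n}) := (q * (1 + a)) ^+ n / q ^+ C * a ^+ #|U|.
have g_ge0 (U : {set 'I_n}) : 0 <= g U.
  have [q_ge0 a_ge0] := (ltW q0, ltW a0).
  by rewrite /g !mulr_ge0 ?invr_ge0 ?exprn_ge0 ?mulr_ge0 ?addr_ge0.
apply: (@le_trans _ _ (\sum_(x : 'I_n * {set 'I_n}) g x.2)).
  rewrite [X in _ <= X](bigID (fun x : 'I_n * {set 'I_n} => #|x.2| < d)%N) /=.
  rewrite -[X in X <= _]addr0.
  apply: lerD; last exact: sumr_ge0.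
  apply: ler_sum => x lt_d; rewrite /g mulrAC; apply: expr_le_line.
    by rewrite (leq_trans _ Kd) // leq_mul2l ltnW ?orbT.
  by have := F_ge x; set f := #|F x|; set m := #|x.2|; lia.
rewrite -(pair_bigA _ (fun _ U => g U)) /= sumr_const card_ord -mulr_sumr.
rewrite sum_expr_card card_ord [a + 1]addrC !exprMn.
by rewrite le_eqVlt; apply/orP; left; apply/eqP; ring.
Qed.

End LineObstructionSums.

Lemma sum_rect_obstructions (R : realFieldType) (q : R) (n M : nat)
    (P : pred ({set 'I_n} * {set 'I_n})) (F : {set 'I_n} * {set 'I_n} -> bgraph n) :
  0 <= q <= 1 -> (forall x, P x -> M * n <= #|F x|)%N ->
  \sum_(x | P x) q ^+ #|F x| <= (4 * q ^+ M) ^+ n.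
Proof.
case/andP=> q0 q1 F_ge.
apply: (@le_trans _ _ (\sum_(x : {set 'I_n} * {set 'I_n}) q ^+ (M * n))).
  rewrite [X in _ <= X](bigID P) /= -[X in X <= _]addr0.
  apply: lerD; last by apply: sumr_ge0 => *; rewrite exprn_ge0.
  by apply: ler_sum => x Px; apply: ler_wiXn2l; rewrite ?q0 ?F_ge.
have card_sets : #|{: {set 'I_n}}| = (2 ^ n)%N.
  by rewrite -cardsT -powersetT card_powerset cardsT card_ord.
rewrite sumr_const card_prod card_sets -[_ *+ _]mulr_natr natrM natrX -exprMn.
by rewrite -natrM exprM mulrC -exprMn.
Qed.

Lemma leq_mul_divn_subn (n K C M : nat) : (0 < K)%N ->
  (K * (C + 2 * M * K + 2) <= n)%N -> (M * n <= n %/ K * (n %/ K - C))%N.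
Proof.
(* With d = n %/ K: M n <= M K (d + 1) <= 2 M K d <= (d - C) d. *)
move=> K0 n_ge; set d := (n %/ K)%N.
have d_ge : (C + 2 * M * K + 2 <= d)%N by rewrite leq_divRL // mulnC.
have n_lt : (n < K * d.+1)%N by rewrite mulnC -ltn_divLR.
nia.
Qed.

Lemma Gnnp_prob_no_pm_le (R : realType) (p a r : R) (n C K M : nat) (E : bgraph n) :
  0 < p < 1 -> 0 < a -> 1 <= (1 - p) * a * (1 + a) ^+ K -> (0 < K)%N ->
  (1 - p) * (1 + a) ^+ 2 <= r -> 4 * (1 - p) ^+ M <= r ->
  (K * (C + 2 * M * K + 2) <= n)%N -> deg_bounded C E ->
  Gnnp_prob p (predC (has_pm_avoiding E))
    <= (n%:R * (2 / (1 - p) ^+ C) + 1) * r ^+ n.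
Proof.
move=> p01 a0 qaK K0 line_r rect_r n_ge E_deg; have /andP [p0 p1] := p01.
set q := 1 - p in qaK line_r rect_r *; set d := (n %/ K)%N.
have q0 : 0 < q by rewrite subr_gt0.
have q1 : q <= 1 by rewrite lerBlDr lerDl ltW.
have [q_ge0 a_ge0] := (ltW q0, ltW a0).
have Kd : (K * d <= n)%N by rewrite mulnC leq_divM.
have rn_le x : 0 <= x -> x <= r -> x ^+ n <= r ^+ n.
  by move=> x0 xr; rewrite lerXn2r ?nnegrE // (le_trans x0 xr).
have line_le : n%:R * (q * (1 + a) ^+ 2) ^+ n / q ^+ C <= n%:R * r ^+ n / q ^+ C.
  rewrite ler_wpM2r ?invr_ge0 ?exprn_ge0 // ler_wpM2l // rn_le //.
  by rewrite mulr_ge0 // exprn_ge0 // addr_ge0.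
apply: le_trans (Gnnp_prob_le_sum_disjoint (B := predC (has_pm_avoiding E))
  (introT andP (conj (ltW p0) (ltW p1))) (no_pm_obstruction (E := E) d)) _.
rewrite (_ : _ * r ^+ n = (n%:R * r ^+ n / q ^+ C) *+ 2 + r ^+ n); last by ring.
rewrite !big_sumType /= mulr2n; apply: lerD; first apply: lerD.
- apply: le_trans line_le; apply: (sum_line_obstructions q0 q1 a0 qaK Kd) => x.
  exact: card_row_obstruction.
- apply: le_trans line_le; apply: (sum_line_obstructions q0 q1 a0 qaK Kd) => x.
  exact: card_col_obstruction.
apply: le_trans (rn_le _ _ rect_r); last by rewrite mulr_ge0 ?exprn_ge0.
apply: sum_rect_obstructions => [|[S T] /andP [dS dT]]; first by rewrite q_ge0.
apply: leq_trans (leq_mul_divn_subn K0 n_ge) _.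
by apply: leq_trans (card_rect_obstruction E_deg S T); rewrite leq_mul // leq_sub2r.
Qed.

Lemma Gnnp_prob_no_pm_geometric (R : realType) (p : R) (C : nat) : 0 < p < 1 ->
  exists2 r : R, 0 < r < 1 & exists2 A : R, 0 <= A &
    exists N, forall n, (N <= n)%N -> forall E : bgraph n, deg_bounded C E ->
      Gnnp_prob p (predC (has_pm_avoiding E)) <= (n%:R * A + 1) * r ^+ n.
Proof.
move=> p01; have /andP [p0 p1] := p01.
set q := 1 - p; set a := p / 6; set r := (1 + q) / 2.
have q0 : 0 < q by rewrite subr_gt0.
have a0 : 0 < a by rewrite divr_gt0.
have aE : 6 * a = p by rewrite /a mulrC divfK ?pnatr_eq0.
have qE : q + p = 1 by rewrite /q subrK.
have rE : 2 * r = 1 + q by rewrite /r mulrC divfK ?pnatr_eq0.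
have line_r : q * (1 + a) ^+ 2 <= r.
  have : 0 <= (1 - q) * (a * (2 + a)) by rewrite !mulr_ge0 //; lra.
  have : 0 <= a * (1 - a) by rewrite mulr_ge0 //; lra.
  by rewrite expr2; nra.
have a1 : 1 < 1 + a by rewrite ltrDl.
have [K aK] := expr_gt1_ge (q * a)^-1 a1.
have qaK : 1 <= q * a * (1 + a) ^+ K.+1.
  have qa0 : 0 < q * a by rewrite mulr_gt0.
  rewrite -[X in X <= _](divff (lt0r_neq0 qa0)) ler_wpM2l ?(ltW qa0) //.
  by rewrite (le_trans aK) // ler_weXn2l // ltW.
have [M rect_r] : exists M, 4 * q ^+ M <= r.
  have q01 : 0 < q < 1 by rewrite q0 /=; lra.
  have r4 : 0 < r / 4 by rewrite divr_gt0 //; lra.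
  have [M qM] := expr_lt1_le q01 r4.
  by exists M; lra.
exists r; first by apply/andP; split; lra.
exists (2 / q ^+ C); first by rewrite divr_ge0 ?exprn_ge0 ?(ltW q0).
exists (K.+1 * (C + 2 * M * K.+1 + 2))%N => n n_ge E E_deg.
exact: Gnnp_prob_no_pm_le p01 a0 qaK (ltn0Sn K) line_r rect_r n_ge E_deg.
Qed.

Unset Implicit Arguments.

Theorem lemma9 (R : realType) (p : R) (C : nat) :
  0 < p < 1 -> (0 < C)%N ->
  exists c : R, 0 < c /\ exists N : nat, forall n : nat, (N <= n)%N ->
    forall E : bgraph n, deg_bounded C E ->
      1 - expR (- (c * n%:R)) <= Gnnp_prob p (has_pm_avoiding E).
Proof.
move=> p01 _.
have [r r01 [A A0 [N1 no_pm_le]]] := Gnnp_prob_no_pm_geometric C p01.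
have [s s01 [N2 geom_le]] := linear_geometric_le r01 A0.
have /andP [s0 _] := s01.
exists (- ln s); split; first by rewrite oppr_gt0 ln_lt0.
exists (maxn N1 N2) => n; rewrite geq_max => /andP [le_N1 le_N2] E E_deg.
rewrite mulNr opprK expRM_natr lnK ?posrE //.
have := Gnnp_probC p (has_pm_avoiding E).
have := le_trans (no_pm_le n le_N1 E E_deg) (geom_le n le_N2).
lra.
Qed.
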